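(* Assume the recursive Laplacians $\mathbf{L}^{(H)}$ and operators $\mathbf{M}^{(H)}$ below, and suppose that for every non-root node $D$, $\widetilde{\mathrm{SC}}(\mathbf{L}^{(D)},\partial D)\approx_{\epsilon}\mathrm{SC}(\mathbf{L}^{(D)},\partial D)$. Then for every node $H$ at level $i$ of $\mathcal{T}$ and every vector $\mathbf{z}$, \[\|\mathbf{M}^{(H)}\mathbf{z}\|_2^2\le e^{i\epsilon}\,\mathbf{z}^\top\mathbf{L}^{(H)}\mathbf{z}=e^{i\epsilon}\,\mathcal{E}_{\mathbf{L}^{(H)}}(\mathbf{L}^{(H)}\mathbf{z}).\]
   Context: Setup. $G=(V,E)$ is a connected undirected graph with positive edge weights, $\mathbf{W}=\mathrm{diag}(\mathbf{w})$, signed incidence matrix $\mathbf{B}\in\mathbb{R}^{E\times V}$; for a region (edge-induced subgraph) $H$, $\mathbf{B}[H]$ is $\mathbf{B}$ with rows of edges not in $E(H)$ set to zero. All matrices/vectors are padded with zeros to $V$- or $E$-indexed dimensions; $\mathbf{M}^{-1}$ is the Moore–Penrose pseudoinverse; $\mathbf{A}\approx_t\mathbf{B}$ means $e^{-t}\mathbf{A}\preceq\mathbf{B}\preceq e^{t}\mathbf{A}$; for a Laplacian $\mathbf{L}$ supported on $U$ and $C\subseteq U$, $F=U\setminus C$, $\mathrm{SC}(\mathbf{L},C)=\mathbf{L}_{C,C}-\mathbf{L}_{C,F}\mathbf{L}_{F,F}^{-1}\mathbf{L}_{F,C}$; energy $\mathcal{E}_{\mathbf{L}}(\mathbf{d})=\mathbf{d}^\top\mathbf{L}^{-1}\mathbf{d}$.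 $\mathcal{T}$ is a separator tree of $G$: a rooted binary tree of regions $H$ with vertex sets $\partial H$, $S(H)$, $F_H$, where the root is $G$ with $\partial G=\emptyset$, $F_G=S(G)$; a non-leaf node $H$ has two children $D_1,D_2$ whose edge sets partition $E(H)$ with $V(D_1)\cap V(D_2)=S(H)$, $\partial D_j=(\partial H\cup S(H))\cap V(D_j)$, $F_H=S(H)\setminus\partial H$; a leaf has constantly many edges, $S(H)=\emptyset$, $F_H=V(H)\setminus\partial H$. The level of a node is the maximum number of edges on a tree path from it down to a descendant (leaves have level 0). Recursive Laplacians. For a leaf $H$, $\mathbf{L}^{(H)}=\mathbf{B}[H]^\top\mathbf{W}\mathbf{B}[H]$. For each node $D$ we are given a Laplacian $\widetilde{\mathrm{SC}}(\mathbf{L}^{(D)},\partial D)$ supported on $\partial D$; for a non-leaf $H$ with children $D_1,D_2$, $\mathbf{L}^{(H)}=\widetilde{\mathrm{SC}}(\mathbf{L}^{(D_1)},\partial D_1)+\widetilde{\mathrm{SC}}(\mathbf{L}^{(D_2)},\partial D_2)$. Assume each $\mathbf{L}^{(H)}$ is the Laplacian of a connected graph on vertex set $\partial H\cup F_H$. Operators. For a node $D$ with parent $P$, the edge operator is $\mathbf{M}_{(D,P)}=(\mathbf{L}^{(D)})^{-1}\widetilde{\mathrm{SC}}(\mathbf{L}^{(D)},\partial D)$. Define $\mathbf{M}^{(H)}=\mathbf{W}^{1/2}\mathbf{B}[H]$ for a leaf $H$, and $\mathbf{M}^{(H)}=\mathbf{M}^{(D_1)}\mathbf{M}_{(D_1,H)}+\mathbf{M}^{(D_2)}\mathbf{M}_{(D_2,H)}$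 for a non-leaf $H$ with children $D_1,D_2$. *)

From HB Require Import structures.
From mathcomp Require Import all_boot all_order all_algebra.
From mathcomp Require classical_sets.
From mathcomp Require Import boolp reals sequences exp.
Set Implicit Arguments.
Unset Strict Implicit.
Unset Printing Implicit Defensive.
Import Order.TTheory GRing.Theory Num.Theory.
Local Open Scope ring_scope.

Section Defs.
Variable R : realType.

Definition qf n (A : 'M[R]_n) (x : 'cV[R]_n) : R := ((x^T *m A *m x) 0 0).

Definition sqnorm m (v : 'cV[R]_m) : R := \sum_(i < m) (v i 0) ^+ 2.

Definition loewner_le n (A B : 'M[R]_n) : Prop := forall x, qf A x <= qf B x.

Definition approx n (t : R) (A B : 'M[R]_n) : Prop :=
  loewner_le (expR (- t) *: A) B /\ loewner_le B (expR t *: A).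

Definition penrose n (A X : 'M[R]_n) : Prop :=
  [/\ A *m X *m A = A, X *m A *m X = X, (A *m X)^T = A *m X & (X *m A)^T = X *m A].
Definition pinv n (A : 'M[R]_n) : 'M[R]_n := classical_sets.xget 0 (fun X => penrose A X).

Definition energy n (L : 'M[R]_n) (d : 'cV[R]_n) : R := qf (pinv L) d.

(* diagonal 0/1 projector onto a vertex set (used to express zero-padded blocks) *)
Definition proj n (S : {set 'I_n}) : 'M[R]_n :=
  diag_mx (\row_i (if i \in S then 1 else 0)).

(* Schur complement SC(L, C) for L supported on U, F = U \ C, all blocks padded
   with zeros to V x V:  L_CC - L_CF L_FF^{-1} L_FC *)
Definition SC n (L : 'M[R]_n) (U C : {set 'I_n}) : 'M[R]_n :=
  let F := U :\: C in
  proj C *m L *m proj C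
  - (proj C *m L *m proj F) *m pinv (proj F *m L *m proj F) *m (proj F *m L *m proj C).

Definition is_laplacian n (A : 'M[R]_n) : Prop :=
  [/\ A^T = A, (forall i j, i != j -> A i j <= 0) & (forall i, \sum_j A i j = 0)].
Definition supported_on n (A : 'M[R]_n) (U : {set 'I_n}) : Prop :=
  forall i j, (i \notin U) || (j \notin U) -> A i j = 0.
Definition lap_graph n (A : 'M[R]_n) (U : {set 'I_n}) : rel 'I_n :=
  fun x y => [&& x \in U, y \in U, x != y & A x y < 0].
Definition connected_on n (A : 'M[R]_n) (U : {set 'I_n}) : Prop :=
  forall u v, u \in U -> v \in U -> connect (lap_graph A U) u v.
Definition laplacian_on n (A : 'M[R]_n) (U : {set 'I_n}) : Prop :=
  is_laplacian A /\ supported_on A U.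
Definition conn_laplacian_on n (A : 'M[R]_n) (U : {set 'I_n}) : Prop :=
  laplacian_on A U /\ connected_on A U.

(* vertices 'I_n, edges 'I_m; edge e joins tl e and hd e (arbitrary orientation) *)

Definition incidence n m (tl hd : 'I_m -> 'I_n) : 'M[R]_(m, n) :=
  \matrix_(e, v) ((v == hd e)%:R - (v == tl e)%:R).

Definition incidence_on n m (tl hd : 'I_m -> 'I_n) (Es : {set 'I_m}) : 'M[R]_(m, n) :=
  \matrix_(e, v) (if e \in Es then incidence tl hd e v else 0).

Definition Wmx m (w : 'I_m -> R) : 'M[R]_m := diag_mx (\row_e w e).
Definition Wsqrt m (w : 'I_m -> R) : 'M[R]_m := diag_mx (\row_e Num.sqrt (w e)).

Definition vset n m (tl hd : 'I_m -> 'I_n) (Es : {set 'I_m}) : {set 'I_n} :=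
  [set v | [exists e in Es, (v == tl e) || (v == hd e)]].

Definition graph_adj n m (tl hd : 'I_m -> 'I_n) : rel 'I_n :=
  fun u v => [exists e, ((tl e == u) && (hd e == v)) || ((tl e == v) && (hd e == u))].
Definition graph_connected n m (tl hd : 'I_m -> 'I_n) : Prop :=
  forall u v, connect (graph_adj tl hd) u v.

(* A node stores its edge set E(H), boundary dH, (for non-leaves) separator S(H),
   and the given Laplacian  SC~(L^(H), dH). *)
Inductive stree (n m : nat) : Type :=
| SLeaf (Es : {set 'I_m}) (bd : {set 'I_n}) (sct : 'M[R]_n)
| SNode (Es : {set 'I_m}) (bd : {set 'I_n}) (S : {set 'I_n}) (sct : 'M[R]_n)
        (l r : stree n m).

Variables (n m : nat) (tl hd : 'I_m -> 'I_n) (w : 'I_m -> R).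

Definition st_edges (T : stree n m) := match T with SLeaf Es _ _ => Es | SNode Es _ _ _ _ _ => Es end.
Definition st_bd (T : stree n m) := match T with SLeaf _ bd _ => bd | SNode _ bd _ _ _ _ => bd end.
Definition st_sct (T : stree n m) := match T with SLeaf _ _ s => s | SNode _ _ _ s _ _ => s end.
Definition st_sep (T : stree n m) : {set 'I_n} :=
  match T with SLeaf _ _ _ => set0 | SNode _ _ Sp _ _ _ => Sp end.
Definition st_V (T : stree n m) := vset tl hd (st_edges T).
Definition st_F (T : stree n m) : {set 'I_n} :=
  match T with
  | SLeaf Es bd _ => vset tl hd Es :\: bd
  | SNode _ bd Sp _ _ _ => Sp :\: bd
  end.

Fixpoint st_level (T : stree n m) : nat :=
  match T with SLeaf _ _ _ => 0%N | SNode _ _ _ _ l r => (maxn (st_level l) (st_level r)).+1 end.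

Fixpoint st_wf (T : stree n m) : Prop :=
  match T with
  | SLeaf _ _ _ => True
  | SNode Es bd Sp _ l r =>
      [/\ st_edges l :&: st_edges r = set0,
          st_edges l :|: st_edges r = Es,
          st_V l :&: st_V r = Sp,
          st_bd l = (bd :|: Sp) :&: st_V l &
          st_bd r = (bd :|: Sp) :&: st_V r] /\ (st_wf l /\ st_wf r)
  end.

Fixpoint in_tree (D T : stree n m) : Prop :=
  D = T \/ match T with SLeaf _ _ _ => False | SNode _ _ _ _ l r => in_tree D l \/ in_tree D r end.
Definition nonroot (D T : stree n m) : Prop :=
  match T with SLeaf _ _ _ => False | SNode _ _ _ _ l r => in_tree D l \/ in_tree D r end.

Definition st_lap (T : stree n m) : 'M[R]_n :=
  match T with
  | SLeaf Es _ _ => (incidence_on tl hd Es)^T *m Wmx w *m incidence_on tl hd Es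
  | SNode _ _ _ _ l r => st_sct l + st_sct r
  end.

Definition edge_op (D : stree n m) : 'M[R]_n := pinv (st_lap D) *m st_sct D.

Fixpoint st_M (T : stree n m) : 'M[R]_(m, n) :=
  match T with
  | SLeaf Es _ _ => Wsqrt w *m incidence_on tl hd Es
  | SNode _ _ _ _ l r => st_M l *m edge_op l + st_M r *m edge_op r
  end.

End Defs.

From HB Require Import structures.
From mathcomp Require Import all_boot all_order all_algebra.
From mathcomp Require classical_sets.
From mathcomp Require Import boolp reals sequences exp.
From mathcomp Require Import ring lra.
Set Implicit Arguments.
Unset Strict Implicit.
Unset Printing Implicit Defensive.
Import Order.TTheory GRing.Theory Num.Theory.
Local Open Scope ring_scope.

(* Unfolding M^(H) once, the contributions of the two children are supported
   on the disjoint edge sets E(D_1) and E(D_2), so |M^(H) z|^2 splits into a sum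
   over the children and induction reduces the claim to a one-level estimate:
   if S ~_eps SC(L, C) and S is supported on C, then x := L^+ S z satisfies
   x^T L x <= e^eps z^T S z.  For the restriction x_C of x to C one has
   x^T L x = (S z)^T x_C, while the variational property of the Schur complement
   gives e^-eps x_C^T S x_C <= x_C^T SC(L, C) x_C <= x^T L x; expanding
   0 <= (x_C - e^eps z)^T S (x_C - e^eps z) then yields the estimate.  Summing
   over the children recovers z^T L^(H) z, as L^(H) is the sum of the children's
   approximate Schur complements. *)

Section RealMatrices.
Variable R : realType.

Definition vdot n (u v : 'cV[R]_n) : R := (u^T *m v) 0 0.

Lemma vdotE n (u v : 'cV[R]_n) : vdot u v = \sum_i u i 0 * v i 0.
Proof. by rewrite /vdot mxE; apply: eq_bigr => i _; rewrite mxE. Qed.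

Lemma vdotC n (u v : 'cV[R]_n) : vdot u v = vdot v u.
Proof. by rewrite !vdotE; apply: eq_bigr => i _; rewrite mulrC. Qed.

Lemma vdotDr n (u v1 v2 : 'cV[R]_n) : vdot u (v1 + v2) = vdot u v1 + vdot u v2.
Proof. by rewrite /vdot mulmxDr mxE. Qed.

Lemma vdotDl n (u1 u2 v : 'cV[R]_n) : vdot (u1 + u2) v = vdot u1 v + vdot u2 v.
Proof. by rewrite vdotC vdotDr !(vdotC v). Qed.

Lemma vdotZr n a (u v : 'cV[R]_n) : vdot u (a *: v) = a * vdot u v.
Proof. by rewrite /vdot -scalemxAr mxE. Qed.

Lemma vdotZl n a (u v : 'cV[R]_n) : vdot (a *: u) v = a * vdot u v.
Proof. by rewrite vdotC vdotZr vdotC. Qed.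

Lemma vdotBr n (u v1 v2 : 'cV[R]_n) : vdot u (v1 - v2) = vdot u v1 - vdot u v2.
Proof. by rewrite vdotDr -scaleN1r vdotZr mulN1r. Qed.

Lemma vdot0l n (u : 'cV[R]_n) : vdot 0 u = 0.
Proof. by rewrite /vdot trmx0 mul0mx mxE. Qed.

Lemma vdotMr m n (A : 'M[R]_(m, n)) u v : vdot u (A *m v) = vdot (A^T *m u) v.
Proof. by rewrite /vdot trmx_mul trmxK mulmxA. Qed.

Lemma vdotMl m n (A : 'M[R]_(m, n)) u v : vdot (A *m u) v = vdot u (A^T *m v).
Proof. by rewrite vdotMr trmxK. Qed.

Lemma vdot_eq0 n (u : 'cV[R]_n) : vdot u u = 0 -> u = 0.
Proof.
rewrite vdotE => /eqP; rewrite psumr_eq0 => [/allP uu0|i _]; last first.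
  by rewrite -expr2 sqr_ge0.
apply/colP => i; apply/eqP; rewrite mxE -sqrf_eq0 expr2.
exact: uu0 (mem_index_enum i).
Qed.

Lemma sqnormE m (v : 'cV[R]_m) : sqnorm v = vdot v v.
Proof. by rewrite vdotE; apply: eq_bigr => i _; rewrite expr2. Qed.

Lemma qfE n (A : 'M[R]_n) x : qf A x = vdot x (A *m x).
Proof. by rewrite /qf /vdot mulmxA. Qed.

Lemma row_free_mul_tr_unitmx k r (B : 'M[R]_(k, r)) :
  row_free B -> B *m B^T \in unitmx.
Proof.
move=> freeB; rewrite -row_free_unit -kermx_eq0; apply/eqP/row_matrixP => i.
rewrite row0; set u := row i _.
have uBB : u *m (B *m B^T) = 0 by rewrite /u -row_mul mulmx_ker row0.
have uB : u *m B = 0.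
  apply: trmx_inj; rewrite trmx0; apply: vdot_eq0.
  by rewrite /vdot trmxK trmx_mul mulmxA -(mulmxA u) uBB mul0mx mxE.
by apply/eqP; rewrite -(mulmx_free_eq0 _ freeB) uB.
Qed.

Lemma penrose_full_rank_factor n r (B : 'M[R]_(n, r)) (C : 'M[R]_(r, n)) :
  B^T *m B \in unitmx -> C *m C^T \in unitmx -> exists X, penrose (B *m C) X.
Proof.
move=> BBu CCu; set P := invmx (C *m C^T); set Q := invmx (B^T *m B).
have CCP : C *m C^T *m P = 1%:M by rewrite mulmxV.
have QBB : Q *m (B^T *m B) = 1%:M by rewrite mulVmx.
have tP : P^T = P by rewrite /P trmx_inv trmx_mul trmxK.
have tQ : Q^T = Q by rewrite /Q trmx_inv trmx_mul trmxK.
have AX : B *m C *m (C^T *m P *m Q *m B^T) = B *m Q *m B^T.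
  by rewrite -!mulmxA (mulmxA C) (mulmxA (C *m C^T)) CCP mul1mx.
have XA : C^T *m P *m Q *m B^T *m (B *m C) = C^T *m P *m C.
  by rewrite -!mulmxA (mulmxA B^T) (mulmxA Q) QBB mul1mx.
exists (C^T *m P *m Q *m B^T); split.
- by rewrite AX -!mulmxA (mulmxA B^T) (mulmxA Q) QBB mul1mx.
- by rewrite XA -!mulmxA (mulmxA C) (mulmxA (C *m C^T)) CCP mul1mx.
- by rewrite AX !trmx_mul trmxK tQ mulmxA.
- by rewrite XA !trmx_mul trmxK tP mulmxA.
Qed.

Lemma penrose_exists n (A : 'M[R]_n) : exists X, penrose A X.
Proof.
rewrite -(mulmx_base A); apply: penrose_full_rank_factor.
- rewrite -{2}[col_base A]trmxK row_free_mul_tr_unitmx // /row_free mxrank_tr.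
  exact: col_base_full.
- exact/row_free_mul_tr_unitmx/row_base_free.
Qed.

Lemma pinvP n (A : 'M[R]_n) : penrose A (pinv A).
Proof. exact: (classical_sets.xgetPex 0 (penrose_exists A)). Qed.

Lemma penrose_uniq n (A X Y : 'M[R]_n) : penrose A X -> penrose A Y -> X = Y.
Proof.
case=> [AXA XAX tAX tXA] [AYA YAY tAY tYA].
have XE : X = X *m A *m Y.
  have -> : X = X *m X^T *m A^T by rewrite -{1}XAX -mulmxA -tAX trmx_mul mulmxA.
  rewrite -{1}AYA !trmx_mul !mulmxA -(mulmxA X X^T) -trmx_mul tAX.
  by rewrite -(mulmxA _ Y^T A^T) -trmx_mul tAY (mulmxA X A X) XAX mulmxA.
have YE : Y = X *m A *m Y.
  have -> : Y = A^T *m Y^T *m Y by rewrite -{1}YAY -tYA trmx_mul.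
  rewrite -{1}AXA !trmx_mul -!mulmxA (mulmxA A^T Y^T) -trmx_mul tYA YAY.
  by rewrite mulmxA -trmx_mul tXA mulmxA.
by rewrite XE -YE.
Qed.

Lemma trmx_pinv n (A : 'M[R]_n) : A^T = A -> (pinv A)^T = pinv A.
Proof.
move=> tA; apply: (penrose_uniq _ (pinvP A)).
case: (pinvP A) => [AXA XAX tAX tXA]; split.
- by have := congr1 trmx AXA; rewrite !trmx_mul tA mulmxA.
- by have := congr1 trmx XAX; rewrite !trmx_mul tA mulmxA.
- by rewrite trmx_mul trmxK tA -tXA trmx_mul tA.
- by rewrite trmx_mul trmxK tA -tAX trmx_mul tA.
Qed.

End RealMatrices.

Section QuadraticForms.
Variable R : realType.

Definition psdmx n (L : 'M[R]_n) : Prop := forall x, 0 <= qf L x.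

Lemma qf_conj k n (P : 'M[R]_(k, n)) (L : 'M[R]_k) x :
  qf (P^T *m L *m P) x = qf L (P *m x).
Proof. by rewrite !qfE -!mulmxA vdotMr trmxK. Qed.

Lemma qfD n (L : 'M[R]_n) u v : L^T = L ->
  qf L (u + v) = qf L u + 2 * vdot u (L *m v) + qf L v.
Proof.
move=> tL; rewrite !qfE mulmxDr vdotDl !vdotDr (vdotMr L v) tL (vdotC (L *m v)).
lra.
Qed.

Lemma qfZ n (L : 'M[R]_n) a u : qf L (a *: u) = a ^+ 2 * qf L u.
Proof. by rewrite !qfE -scalemxAr vdotZl vdotZr mulrA expr2. Qed.

Lemma qf_addmx n (L1 L2 : 'M[R]_n) u : qf (L1 + L2) u = qf L1 u + qf L2 u.
Proof. by rewrite !qfE mulmxDl vdotDr. Qed.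

Lemma qf_submx n (L1 L2 : 'M[R]_n) u : qf (L1 - L2) u = qf L1 u - qf L2 u.
Proof. by rewrite !qfE mulmxBl vdotBr. Qed.

Lemma qf_scalemx n (L : 'M[R]_n) a u : qf (a *: L) u = a * qf L u.
Proof. by rewrite !qfE -scalemxAl vdotZr. Qed.

Lemma psdmx_conj k n (P : 'M[R]_(k, n)) (L : 'M[R]_k) :
  psdmx L -> psdmx (P^T *m L *m P).
Proof. by move=> psdL x; rewrite qf_conj. Qed.

Lemma psdmx_qf_eq0 n (L : 'M[R]_n) v : L^T = L -> psdmx L ->
  qf L v = 0 -> L *m v = 0.
Proof.
move=> tL psdL Lv0; set u := L *m v; set p := vdot u u; set q := qf L u.
have q_ge0 : 0 <= q by apply: psdL.
have quad t : 0 <= 2 * t * p + t ^+ 2 * q.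
  have := psdL (v + t *: u).
  by rewrite qfD // qfZ Lv0 -scalemxAr vdotZr vdotMr tL -/p -/q; lra.
(* at t = -p / (q + 1) the quadratic equals -p^2 (q + 2) / (q + 1)^2 *)
have q1_neq0 : q + 1 != 0 by rewrite lt0r_neq0 // ltr_pwDr.
have := quad (- p / (q + 1)); set t := - p / (q + 1) => quad_t.
have tq1 : t * (q + 1) = - p by rewrite /t mulfVK.
have : 0 <= 2 * (t * (q + 1)) * p * (q + 1) + (t * (q + 1)) ^+ 2 * q.
  have -> : 2 * (t * (q + 1)) * p * (q + 1) + (t * (q + 1)) ^+ 2 * q =
            (q + 1) ^+ 2 * (2 * t * p + t ^+ 2 * q) by ring.
  by rewrite mulr_ge0 ?sqr_ge0.
rewrite tq1 => ineq.
by apply: vdot_eq0; rewrite -/p; nra.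
Qed.

Lemma laplacian_psdmx n (A : 'M[R]_n) : is_laplacian A -> psdmx A.
Proof.
case=> tA offA rowA x.
have symA i j : A i j = A j i by rewrite -{1}tA mxE.
have qfA : qf A x = \sum_j \sum_k x j 0 * A j k * x k 0.
  rewrite /qf mxE; under eq_bigr => k _ do rewrite mxE big_distrl /=.
  by rewrite exchange_big /=; apply: eq_bigr => j _; apply: eq_bigr => k _; rewrite mxE.
have rows0 : \sum_j \sum_k A j k * x j 0 ^+ 2 = 0.
  by rewrite big1 // => j _; rewrite -big_distrl /= rowA mul0r.
have cols0 : \sum_j \sum_k A j k * x k 0 ^+ 2 = 0.
  rewrite exchange_big big1 // => k _; under eq_bigr do rewrite symA.
  by rewrite -big_distrl /= rowA mul0r.
have edge_sum : \sum_j \sum_k - A j k * (x j 0 - x k 0) ^+ 2 = 2 * qf A x.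
  rewrite qfA mulr_sumr.
  transitivity (\sum_j (\sum_k 2 * (x j 0 * A j k * x k 0)
                 - \sum_k A j k * x j 0 ^+ 2 - \sum_k A j k * x k 0 ^+ 2)).
    by apply: eq_bigr => j _; rewrite -!sumrB; apply: eq_bigr => k _; ring.
  by rewrite !sumrB rows0 cols0 !subr0; apply: eq_bigr => j _; rewrite mulr_sumr.
have : 0 <= \sum_j \sum_k - A j k * (x j 0 - x k 0) ^+ 2.
  apply: sumr_ge0 => j _; apply: sumr_ge0 => k _.
  have [->|jk] := eqVneq j k; first by rewrite subrr expr0n mulr0.
  by rewrite mulr_ge0 ?sqr_ge0 // oppr_ge0 offA.
by rewrite edge_sum; lra.
Qed.

Lemma qf_energy n (A : 'M[R]_n) z : A^T = A -> qf A z = energy A (A *m z).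
Proof.
move=> tA; rewrite /energy !qfE vdotMl tA !mulmxA.
by case: (pinvP A) => ->.
Qed.

Lemma sqnormD_disjoint m (u v : 'cV[R]_m) : (forall i, u i 0 * v i 0 = 0) ->
  sqnorm (u + v) = sqnorm u + sqnorm v.
Proof.
move=> uv0; rewrite /sqnorm -big_split; apply: eq_bigr => i _.
by rewrite mxE sqrrD uv0 mul0rn addr0.
Qed.

End QuadraticForms.

Section SchurComplement.
Variable R : realType.
Local Notation proj := (proj R).

Lemma mul_proj_mx n k (S : {set 'I_n}) (A : 'M[R]_(n, k)) :
  proj S *m A = \matrix_(i, j) (if i \in S then A i j else 0).
Proof.
rewrite /proj mul_diag_mx; apply/matrixP => i j; rewrite !mxE.
by case: (i \in S); rewrite ?mul1r ?mul0r.
Qed.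

Lemma mul_mx_proj n k (S : {set 'I_n}) (A : 'M[R]_(k, n)) :
  A *m proj S = \matrix_(i, j) (if j \in S then A i j else 0).
Proof.
rewrite /proj mul_mx_diag; apply/matrixP => i j; rewrite !mxE.
by case: (j \in S); rewrite ?mulr1 ?mulr0.
Qed.

Lemma trmx_proj n (S : {set 'I_n}) : (proj S)^T = proj S.
Proof. exact: tr_diag_mx. Qed.

Lemma mul_projI n (S T : {set 'I_n}) : proj S *m proj T = proj (S :&: T).
Proof.
rewrite mul_proj_mx; apply/matrixP => i j; rewrite !mxE inE.
by case: (i \in S); case: (i \in T); rewrite ?mul0rn.
Qed.

Lemma proj_idem n (S : {set 'I_n}) : proj S *m proj S = proj S.
Proof. by rewrite mul_projI setIid. Qed.

Lemma proj_setD n (U C : {set 'I_n}) : C \subset U ->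
  proj U = proj C + proj (U :\: C).
Proof.
move=> /subsetP sCU; apply/matrixP => i j; rewrite !mxE inE.
case Ci: (i \in C); case Ui: (i \in U); rewrite /= ?mul0rn ?addr0 ?add0r //.
by rewrite sCU in Ui.
Qed.

Lemma proj_supported n (A : 'M[R]_n) U : supported_on A U ->
  proj U *m A *m proj U = A.
Proof.
move=> suppA; rewrite mul_proj_mx mul_mx_proj; apply/matrixP => i j; rewrite !mxE.
by case Ui: (i \in U); case Uj: (j \in U) => //; apply/esym/suppA; rewrite ?Ui ?Uj.
Qed.

Lemma pinv_conj_range n (L P : 'M[R]_n) (a : 'cV[R]_n) : L^T = L -> psdmx L ->
  P^T = P -> P *m P = P ->
  P *m L *m P *m (pinv (P *m L *m P) *m (P *m L *m a)) = P *m L *m a.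
Proof.
move=> tL psdL tP PP; set K := P *m L *m P; set g := P *m L *m a.
have tK : K^T = K by rewrite /K !trmx_mul tP tL mulmxA.
have tKp : (pinv K)^T = pinv K by exact: trmx_pinv.
case: (pinvP K) => KKpK _ tKKp _.
have KKKp : K *m K *m pinv K = K.
  by rewrite -mulmxA -tKKp trmx_mul tK tKp mulmxA KKpK.
set v := g - K *m (pinv K *m g).
have Kv : K *m v = 0.
  by rewrite /v mulmxBr (mulmxA K K) (mulmxA (K *m K)) KKKp subrr.
have PK : P *m K = K by rewrite /K !mulmxA PP.
have Pg : P *m g = g by rewrite /g !mulmxA PP.
have Pv : P *m v = v by rewrite /v mulmxBr Pg (mulmxA P K) PK.
have Lv : L *m v = 0.
  apply: psdmx_qf_eq0 => //.
  by rewrite -Pv -qf_conj tP -/K qfE Kv /vdot mulmx0 mxE.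
have vv : vdot v v = 0.
  rewrite {2}/v vdotBr [vdot v (K *m _)]vdotMr tK Kv vdot0l subr0.
  by rewrite /g -mulmxA vdotMr tP Pv vdotMr tL Lv vdot0l.
by apply/esym/eqP; rewrite -subr_eq0 -/v (vdot_eq0 vv).
Qed.

Lemma qf_SC n (L : 'M[R]_n) U C a : L^T = L -> proj C *m a = a ->
  let PF := proj (U :\: C) in
  qf (SC L U C) a = qf L a - qf (pinv (PF *m L *m PF)) (PF *m L *m a).
Proof.
move=> tL PCa PF; rewrite /SC -/PF qf_submx; congr (_ - _).
  by rewrite -{2}PCa -qf_conj trmx_proj.
have -> : proj C *m L *m PF = (PF *m L *m proj C)^T.
  by rewrite !trmx_mul trmx_proj tL /PF trmx_proj mulmxA.
by rewrite qf_conj -(mulmxA _ (proj C)) PCa.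
Qed.

Lemma qf_SC_le n (L : 'M[R]_n) (U C : {set 'I_n}) (x : 'cV[R]_n) :
  L^T = L -> psdmx L -> supported_on L U -> C \subset U ->
  qf (SC L U C) (proj C *m x) <= qf L x.
Proof.
move=> tL psdL suppL sCU.
set PF := proj (U :\: C); set a := proj C *m x; set b := PF *m x.
set K := PF *m L *m PF; set g := PF *m L *m a; set u := pinv K *m g.
have tPF : PF^T = PF by exact: trmx_proj.
have tK : K^T = K by rewrite /K !trmx_mul tPF tL mulmxA.
have Ku : K *m u = g by apply: pinv_conj_range; rewrite ?proj_idem.
have Pb : PF *m b = b by rewrite /b mulmxA proj_idem.
have Lx : qf L x = qf L a + 2 * vdot b g + qf K b.
  have -> : qf L x = qf L (a + b).
    rewrite -{1}(proj_supported suppL) -{1}trmx_proj qf_conj (proj_setD sCU).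
    by rewrite mulmxDl.
  rewrite qfD // /K -{1}tPF qf_conj Pb; congr (_ + 2 * _ + _).
  by rewrite /g -mulmxA [RHS]vdotMr tPF Pb vdotMr tL vdotC.
have qKu : qf K u = qf (pinv K) g by rewrite qfE Ku vdotC -qfE.
have := psdmx_conj PF psdL (b + u); rewrite tPF -/K qfD // Ku qKu.
have PCa : proj C *m a = a by rewrite /a mulmxA proj_idem.
by rewrite (qf_SC U tL PCa) -/PF -/K -/g Lx; lra.
Qed.

Lemma qf_pinv_mul_le n (L S : 'M[R]_n) (U C : {set 'I_n}) c (z : 'cV[R]_n) :
  0 < c -> L^T = L -> psdmx L -> supported_on L U -> C \subset U ->
  S^T = S -> psdmx S -> supported_on S C ->
  loewner_le (c^-1 *: S) (SC L U C) ->
  qf L (pinv L *m S *m z) <= c * qf S z.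
Proof.
move=> c_gt0 tL psdL suppL sCU tS psdS suppS leS.
set y := S *m z; set x := pinv L *m y; set xC := proj C *m x.
rewrite -mulmxA -/y -/x.
have tLp : (pinv L)^T = pinv L by exact: trmx_pinv.
have [_ LpLLp _ _] := pinvP L.
have PCS : proj C *m S = S.
  by rewrite -{1}(proj_supported suppS) !mulmxA proj_idem proj_supported.
have Lx : qf L x = vdot y xC.
  rewrite qfE /x vdotMl tLp !mulmxA LpLLp -mulmxA -/y -/x.
  by rewrite /xC vdotMr trmx_proj /y mulmxA PCS.
have yxC : vdot y xC = vdot z (S *m xC) by rewrite /y vdotMl tS.
have SxC_le : qf S xC <= c * qf L x.
  have := leS xC; rewrite qf_scalemx => le1.
  have := le_trans le1 (qf_SC_le x tL psdL suppL sCU).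
  by rewrite -(ler_pM2l c_gt0) mulrA mulfV ?gt_eqF // mul1r.
have := psdS (xC + (- c) *: z).
rewrite qfD // qfZ -scalemxAr vdotZr vdotMr tS vdotC -yxC -Lx sqrrN => ineq.
have : 0 <= c * (c * qf S z - qf L x) by lra.
by rewrite pmulr_rge0 // subr_ge0.
Qed.

End SchurComplement.

Section SeparatorTree.
Variables (R : realType) (n m : nat) (tl hd : 'I_m -> 'I_n) (w : 'I_m -> R).
Local Notation stree := (stree R n m).
Local Notation L := (st_lap tl hd w).
Local Notation M := (st_M tl hd w).

Lemma in_tree_refl (T : stree) : in_tree T T.
Proof. by case: T => *; left. Qed.

Lemma in_tree_trans (D H T : stree) : in_tree D H -> in_tree H T -> in_tree D T.
Proof.
move=> DH; elim: T => [Es bd s|Es bd Sp s l IHl r IHr] [<-//|] //=.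
by case=> [/IHl|/IHr] ?; right; [left|right].
Qed.

Lemma in_tree_left Es bd Sp s (l r : stree) : in_tree l (SNode Es bd Sp s l r).
Proof. by right; left; apply: in_tree_refl. Qed.

Lemma in_tree_right Es bd Sp s (l r : stree) : in_tree r (SNode Es bd Sp s l r).
Proof. by right; right; apply: in_tree_refl. Qed.

Lemma nonroot_in_tree (D H : stree) : nonroot D H -> in_tree D H.
Proof. by case: H => //= *; right. Qed.

Lemma in_tree_nonroot (D H T : stree) : in_tree H T -> nonroot D H -> nonroot D T.
Proof.
case: T => [Es bd s|Es bd Sp s l r] [<-//|] //= [Hl|Hr] /nonroot_in_tree DH.
  by left; apply: in_tree_trans Hl.
by right; apply: in_tree_trans Hr.
Qed.

Lemma in_tree_wf (H T : stree) : in_tree H T -> st_wf tl hd T -> st_wf tl hd H.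
Proof.
elim: T => [Es bd s|Es bd Sp s l IHl r IHr] [<-//|] //=.
by case=> [/IHl|/IHr] IH [_ [wfl wfr]]; apply: IH.
Qed.

Lemma st_M_row_eq0 (H : stree) e j : st_wf tl hd H -> e \notin st_edges H ->
  M H e j = 0.
Proof.
elim: H j => [Es bd s|Es bd Sp s l IHl r IHr] j /=.
  move=> _ eEs; rewrite /Wsqrt mul_diag_mx mxE [X in _ * X]mxE.
  by rewrite (negbTE eEs) mulr0.
case=> [[_ <- _ _ _] [wfl wfr]]; rewrite inE negb_or => /andP[el er].
by rewrite !mxE !big1 ?addr0 // => i _; rewrite (IHl i wfl el, IHr i wfr er) mul0r.
Qed.

Lemma trmx_Wsqrt_mul : (forall e, 0 <= w e) -> (Wsqrt w)^T *m Wsqrt w = Wmx w.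
Proof.
move=> w_ge0; rewrite /Wsqrt tr_diag_mx mul_diag_mx; apply/matrixP => i j.
rewrite !mxE; case: (i == j); rewrite ?mulr0n ?mulr0 // !mulr1n.
by rewrite -expr2 sqr_sqrtr.
Qed.

Lemma sqnorm_st_M_leaf Es bd s z : (forall e, 0 <= w e) ->
  sqnorm (M (SLeaf Es bd s) *m z) = qf (L (SLeaf Es bd s)) z.
Proof.
move=> w_ge0 /=.
rewrite sqnormE -mulmxA vdotMl (mulmxA _ (Wsqrt w)) trmx_Wsqrt_mul //.
by rewrite qf_conj qfE.
Qed.

Lemma sqnorm_st_M_node Es bd Sp s (l r : stree) z :
  st_wf tl hd (SNode Es bd Sp s l r) ->
  sqnorm (M (SNode Es bd Sp s l r) *m z) =
    sqnorm (M l *m (edge_op tl hd w l *m z)) +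
    sqnorm (M r *m (edge_op tl hd w r *m z)).
Proof.
case=> [[disj _ _ _ _] [wfl wfr]] /=; rewrite mulmxDl -!mulmxA.
apply: sqnormD_disjoint => e; have [el|el] := boolP (e \in st_edges l).
  have er : e \notin st_edges r.
    by apply: contraFN (in_set0 e) => er; rewrite -disj inE el.
  by rewrite [X in _ * X]mxE big1 ?mulr0 // => i _; rewrite st_M_row_eq0 ?mul0r.
by rewrite mxE big1 ?mul0r // => i _; rewrite st_M_row_eq0 ?mul0r.
Qed.

End SeparatorTree.

Section LevelBound.
Variables (R : realType) (n m : nat) (tl hd : 'I_m -> 'I_n) (w : 'I_m -> R).
Variables (T : stree R n m) (eps : R).
Local Notation L := (st_lap tl hd w).
Local Notation M := (st_M tl hd w).
Local Notation S := (@st_sct R n m).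

Hypothesis w_ge0 : forall e, 0 <= w e.
Hypothesis T_wf : st_wf tl hd T.
Hypothesis sct_laplacian : forall D, in_tree D T -> laplacian_on (S D) (st_bd D).
Hypothesis lap_laplacian : forall H, in_tree H T ->
  laplacian_on (L H) (st_bd H :|: st_F tl hd H).
Hypothesis eps_ge0 : 0 <= eps.
Hypothesis sct_approx : forall D, nonroot D T ->
  approx eps (S D) (SC (L D) (st_bd D :|: st_F tl hd D) (st_bd D)).

Lemma qf_edge_op_le D z : nonroot D T ->
  qf (L D) (edge_op tl hd w D *m z) <= expR eps * qf (S D) z.
Proof.
move=> DT; have DinT := nonroot_in_tree DT.
have [lapL suppL] := lap_laplacian DinT; have [tL _ _] := lapL.
have [lapS suppS] := sct_laplacian DinT; have [tS _ _] := lapS.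
apply: (qf_pinv_mul_le _ _ tL _ suppL (subsetUl _ _) tS _ suppS).
- exact: expR_gt0.
- exact: laplacian_psdmx.
- exact: laplacian_psdmx.
- by rewrite -expRN; case: (sct_approx DT).
Qed.

Lemma sqnorm_child_le D k z : nonroot D T -> (st_level D <= k)%N ->
  (forall x, sqnorm (M D *m x) <= expR ((st_level D)%:R * eps) * qf (L D) x) ->
  sqnorm (M D *m (edge_op tl hd w D *m z))
    <= expR (k%:R * eps) * (expR eps * qf (S D) z).
Proof.
move=> DT levD IH; apply: le_trans (IH _) _.
have [lapD _] := lap_laplacian (nonroot_in_tree DT).
apply: le_trans (ler_wpM2l (expR_ge0 _) (qf_edge_op_le z DT)).
by rewrite ler_wpM2r ?laplacian_psdmx // ler_expR ler_wpM2r // ler_nat.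
Qed.

Lemma sqnorm_st_M_le H z : in_tree H T ->
  sqnorm (M H *m z) <= expR ((st_level H)%:R * eps) * qf (L H) z.
Proof.
elim: H z => [Es bd s|Es bd Sp s l IHl r IHr] z HT.
  by rewrite sqnorm_st_M_leaf // mul0r expR0 mul1r.
have lT := in_tree_trans (in_tree_left _ _ _ _ _ _) HT.
have rT := in_tree_trans (in_tree_right _ _ _ _ _ _) HT.
have lnr : nonroot l T by apply: in_tree_nonroot HT _; left; apply: in_tree_refl.
have rnr : nonroot r T by apply: in_tree_nonroot HT _; right; apply: in_tree_refl.
rewrite sqnorm_st_M_node; last exact: in_tree_wf HT T_wf.
rewrite /= qf_addmx -natr1 mulrDl mul1r expRD -mulrA !mulrDr.
apply: lerD; apply: sqnorm_child_le; rewrite ?leq_maxl ?leq_maxr //.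
- by move=> x; apply: IHl x lT.
- by move=> x; apply: IHr x rT.
Qed.

End LevelBound.

Theorem mainTheorem12 (R : realType) (n m : nat) (tl hd : 'I_m -> 'I_n)
    (w : 'I_m -> R) (T : stree R n m) (eps : R) :
  (forall e, tl e != hd e) ->
  graph_connected tl hd ->
  (forall e, 0 < w e) ->
  st_edges T = [set: 'I_m] ->
  st_bd T = set0 ->
  st_wf tl hd T ->
  (forall D, in_tree D T -> laplacian_on (st_sct D) (st_bd D)) ->
  (forall H, in_tree H T ->
     conn_laplacian_on (st_lap tl hd w H) (st_bd H :|: st_F tl hd H)) ->
  0 <= eps ->
  (forall D, nonroot D T ->
     approx eps (st_sct D)
       (SC (st_lap tl hd w D) (st_bd D :|: st_F tl hd D) (st_bd D))) ->
  forall H, in_tree H T ->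
  forall z : 'cV[R]_n,
    sqnorm (st_M tl hd w H *m z)
      <= expR ((st_level H)%:R * eps) * qf (st_lap tl hd w H) z
    /\ qf (st_lap tl hd w H) z = energy (st_lap tl hd w H) (st_lap tl hd w H *m z).
Proof.
move=> _ _ w_gt0 _ _ T_wf sct_lap lap_conn eps_ge0 sct_approx H HT z.
have [[[tL _ _] _] _] := lap_conn H HT.
split; last exact: qf_energy.
apply: sqnorm_st_M_le T_wf sct_lap _ eps_ge0 sct_approx _ _ HT.
- by move=> e; apply/ltW.
- by move=> D DT; case: (lap_conn D DT).
Qed.
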